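(* Let $\theta\in[0,1]$ and $\Delta t,\Delta x>0$ satisfy $\Delta t(1-2\theta)\le\frac{\Delta x^3}{4}$. Then for every sequence $a\in\ell^2_\Delta(\mathbb Z)$, $$\|\mathcal A_{-(1-\theta)}a\|^2_{\ell^2_\Delta}\le\|\mathcal A_\theta a\|^2_{\ell^2_\Delta}.$$
   Context: For a sequence $a=(a_j)_{j\in\mathbb Z}$: $D_+(a)_j=(a_{j+1}-a_j)/\Delta x$, $D_-(a)_j=(a_j-a_{j-1})/\Delta x$; $\|a\|_{\ell^2_\Delta}=(\Delta x\sum_j a_j^2)^{1/2}$. For $\alpha\in\mathbb R$, $\mathcal A_\alpha=I+\alpha\Delta tD_+D_+D_-$; thus $\mathcal A_{-(1-\theta)}=I-(1-\theta)\Delta tD_+D_+D_-$. *)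

From Stdlib Require Import Reals ZArith Lra.
From Coquelicot Require Import Coquelicot.
Open Scope R_scope.

Definition seqZ := Z -> R.

Definition Dp (dx : R) (a : seqZ) : seqZ := fun j => (a (j + 1)%Z - a j) / dx.
Definition Dm (dx : R) (a : seqZ) : seqZ := fun j => (a j - a (j - 1)%Z) / dx.

Definition Aop (alpha dt dx : R) (a : seqZ) : seqZ :=
  fun j => a j + alpha * dt * Dp dx (Dp dx (Dm dx a)) j.

(* Sum over Z split into the nonnegative indices j = n and negative indices j = -n-1 *)
Definition in_l2 (a : seqZ) : Prop :=
  ex_series (fun n : nat => (a (Z.of_nat n)) ^ 2) /\
  ex_series (fun n : nat => (a (- Z.of_nat n - 1)%Z) ^ 2).

Definition sumZ (f : seqZ) : R :=
  Series (fun n : nat => f (Z.of_nat n)) + Series (fun n : nat => f (- Z.of_nat n - 1)%Z).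

Definition norm2_l2 (dx : R) (a : seqZ) : R := dx * sumZ (fun j => (a j) ^ 2).

(** The operators satisfy [A_θ = A_{-(1-θ)} + Δt D₊D₊D₋], so with [L = D₊D₊D₋ a]
    and [w = D₊D₋ a] one gets
    [‖A_θ a‖² - ‖A_{-(1-θ)} a‖² = Δx Δt (2 Σ a L - Δt (1 - 2θ) Σ L²)].
    Two summations by parts give [2 Σ a L = Δx Σ w²], while
    [(w_{j+1} - w_j)² ≤ 2 w_{j+1}² + 2 w_j²] gives [Δx² Σ L² ≤ 4 Σ w²];
    the CFL condition [Δt (1 - 2θ) ≤ Δx³/4] makes the difference nonnegative. *)

From Stdlib Require Import Reals ZArith Lra Lia.
From Coquelicot Require Import Coquelicot.
Open Scope R_scope.

Definition ex_sumZ (f : seqZ) : Prop :=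
  ex_series (fun n : nat => f (Z.of_nat n)) /\
  ex_series (fun n : nat => f (- Z.of_nat n - 1)%Z).

Section Summation.

Implicit Types (f g : seqZ) (c : R).

Lemma ex_sumZ_ext f g : (forall j, f j = g j) -> ex_sumZ f -> ex_sumZ g.
Proof.
  intros Hfg [Hpos Hneg]; split.
  - exact (ex_series_ext _ _ (fun n => Hfg _) Hpos).
  - exact (ex_series_ext _ _ (fun n => Hfg _) Hneg).
Qed.

Lemma ex_sumZ_plus f g : ex_sumZ f -> ex_sumZ g -> ex_sumZ (fun j => f j + g j).
Proof. intros [] []; split; apply (ex_series_plus (V := R_NormedModule)); assumption. Qed.

Lemma ex_sumZ_scal_l c f : ex_sumZ f -> ex_sumZ (fun j => c * f j).
Proof. intros []; split; apply (ex_series_scal_l (V := R_NormedModule)); assumption. Qed.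

Lemma ex_sumZ_minus f g : ex_sumZ f -> ex_sumZ g -> ex_sumZ (fun j => f j - g j).
Proof.
  intros Hf Hg.
  apply (ex_sumZ_ext (fun j => f j + -1 * g j)); [intro; ring|].
  apply ex_sumZ_plus, ex_sumZ_scal_l; assumption.
Qed.

Lemma ex_sumZ_le f g : (forall j, Rabs (f j) <= g j) -> ex_sumZ g -> ex_sumZ f.
Proof.
  intros Hfg [Hpos Hneg]; split.
  - exact (ex_series_le (V := R_CompleteNormedModule) _ _ (fun n => Hfg _) Hpos).
  - exact (ex_series_le (V := R_CompleteNormedModule) _ _ (fun n => Hfg _) Hneg).
Qed.

(* Shifting moves [f 0] between the nonnegative and the negative half of [sumZ]. *)
Lemma ex_sumZ_succ f : ex_sumZ f -> ex_sumZ (fun j => f (j + 1)%Z).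
Proof.
  intros [Hpos Hneg]; split.
  - apply ex_series_incr_1 in Hpos.
    refine (ex_series_ext _ _ _ Hpos); intro n; f_equal; lia.
  - apply (ex_series_incr_1 (V := R_NormedModule)).
    refine (ex_series_ext _ _ _ Hneg); intro n; f_equal; lia.
Qed.

Lemma ex_sumZ_pred f : ex_sumZ f -> ex_sumZ (fun j => f (j - 1)%Z).
Proof.
  intros [Hpos Hneg]; split.
  - apply (ex_series_incr_1 (V := R_NormedModule)).
    refine (ex_series_ext _ _ _ Hpos); intro n; f_equal; lia.
  - apply ex_series_incr_1 in Hneg.
    refine (ex_series_ext _ _ _ Hneg); intro n; f_equal; lia.
Qed.

Lemma sumZ_ext f g : (forall j, f j = g j) -> sumZ f = sumZ g.
Proof.
  intros Hfg; unfold sumZ.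
  rewrite (Series_ext _ _ (fun n => Hfg (Z.of_nat n))).
  rewrite (Series_ext _ _ (fun n => Hfg (- Z.of_nat n - 1)%Z)).
  reflexivity.
Qed.

Lemma sumZ_plus f g : ex_sumZ f -> ex_sumZ g -> sumZ (fun j => f j + g j) = sumZ f + sumZ g.
Proof.
  intros [] []; unfold sumZ.
  rewrite !Series_plus by assumption.
  ring.
Qed.

Lemma sumZ_minus f g : ex_sumZ f -> ex_sumZ g -> sumZ (fun j => f j - g j) = sumZ f - sumZ g.
Proof.
  intros [] []; unfold sumZ.
  rewrite !Series_minus by assumption.
  ring.
Qed.

Lemma sumZ_scal_l c f : sumZ (fun j => c * f j) = c * sumZ f.
Proof. unfold sumZ; rewrite !Series_scal_l; ring. Qed.

Lemma sumZ_succ f : ex_sumZ f -> sumZ (fun j => f (j + 1)%Z) = sumZ f.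
Proof.
  intros [Hpos Hneg]; unfold sumZ.
  assert (Hneg0 : ex_series (fun n : nat => f (- Z.of_nat n)%Z)).
  { apply (ex_series_incr_1 (V := R_NormedModule)).
    refine (ex_series_ext _ _ _ Hneg); intro n; f_equal; lia. }
  rewrite (Series_incr_1 (fun n => f (Z.of_nat n))) by assumption.
  rewrite (Series_ext (fun n => f (- Z.of_nat n - 1 + 1)%Z) (fun n => f (- Z.of_nat n)%Z))
    by (intro; f_equal; lia).
  rewrite (Series_incr_1 (fun n => f (- Z.of_nat n)%Z)) by assumption.
  rewrite (Series_ext (fun n => f (Z.of_nat n + 1)%Z) (fun n => f (Z.of_nat (S n))))
    by (intro; f_equal; lia).
  rewrite (Series_ext (fun n => f (- Z.of_nat (S n))%Z) (fun n => f (- Z.of_nat n - 1)%Z))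
    by (intro; f_equal; lia).
  simpl; ring.
Qed.

Lemma sumZ_telescope f : ex_sumZ f -> sumZ (fun j => f (j + 1)%Z - f j) = 0.
Proof.
  intros Hf.
  rewrite sumZ_minus, sumZ_succ by (try apply ex_sumZ_succ; assumption).
  ring.
Qed.

Lemma Series_ge0 (u : nat -> R) : (forall n, 0 <= u n) -> ex_series u -> 0 <= Series u.
Proof.
  intros Hu Hex.
  rewrite <- (Rmult_0_l (Series u)), <- Series_scal_l.
  apply Series_le; [|assumption].
  intro n; specialize (Hu n); lra.
Qed.

Lemma sumZ_ge0 f : (forall j, 0 <= f j) -> ex_sumZ f -> 0 <= sumZ f.
Proof.
  intros Hf [Hpos Hneg]; unfold sumZ.
  pose proof (Series_ge0 _ (fun n => Hf _) Hpos).
  pose proof (Series_ge0 _ (fun n => Hf _) Hneg).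
  lra.
Qed.

Lemma sumZ_le f g : (forall j, f j <= g j) -> ex_sumZ f -> ex_sumZ g -> sumZ f <= sumZ g.
Proof.
  intros Hfg Hf Hg.
  assert (Hdiff : 0 <= sumZ (fun j => g j - f j)).
  { apply sumZ_ge0; [intro j; specialize (Hfg j); lra | apply ex_sumZ_minus; assumption]. }
  rewrite sumZ_minus in Hdiff by assumption.
  lra.
Qed.

End Summation.

Section SquareSummable.

Implicit Types (u v : seqZ) (c : R).

Lemma ex_sumZ_mult u v : in_l2 u -> in_l2 v -> ex_sumZ (fun j => u j * v j).
Proof.
  intros Hu Hv.
  apply (ex_sumZ_le _ (fun j => u j ^ 2 + v j ^ 2)).
  - intro j; apply Rabs_le; split; nra.
  - apply ex_sumZ_plus; assumption.
Qed.

Lemma in_l2_ext u v : (forall j, u j = v j) -> in_l2 u -> in_l2 v.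
Proof. intros Huv; apply (ex_sumZ_ext (fun j => u j ^ 2) (fun j => v j ^ 2)); intro j; rewrite Huv; reflexivity. Qed.

Lemma in_l2_scal_l c u : in_l2 u -> in_l2 (fun j => c * u j).
Proof.
  intros Hu; apply (ex_sumZ_ext (fun j => c ^ 2 * u j ^ 2) (fun j => (c * u j) ^ 2)); [intro; ring|].
  apply ex_sumZ_scal_l; assumption.
Qed.

Lemma in_l2_succ u : in_l2 u -> in_l2 (fun j => u (j + 1)%Z).
Proof. exact (ex_sumZ_succ (fun j => u j ^ 2)). Qed.

Lemma in_l2_pred u : in_l2 u -> in_l2 (fun j => u (j - 1)%Z).
Proof. exact (ex_sumZ_pred (fun j => u j ^ 2)). Qed.

Lemma in_l2_minus u v : in_l2 u -> in_l2 v -> in_l2 (fun j => u j - v j).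
Proof.
  intros Hu Hv.
  apply (ex_sumZ_le (fun j => (u j - v j) ^ 2) (fun j => 2 * u j ^ 2 + 2 * v j ^ 2)).
  - intro j; rewrite Rabs_right by (apply Rle_ge, pow2_ge_0).
    pose proof (pow2_ge_0 (u j + v j)); nra.
  - apply ex_sumZ_plus; apply ex_sumZ_scal_l; assumption.
Qed.

Lemma in_l2_Dp dx u : in_l2 u -> in_l2 (Dp dx u).
Proof.
  intros Hu; apply (in_l2_ext (fun j => / dx * (u (j + 1)%Z - u j))).
  - intro j; unfold Dp, Rdiv; ring.
  - apply in_l2_scal_l, in_l2_minus; [apply in_l2_succ|]; assumption.
Qed.

Lemma in_l2_Dm dx u : in_l2 u -> in_l2 (Dm dx u).
Proof.
  intros Hu; apply (in_l2_ext (fun j => / dx * (u j - u (j - 1)%Z))).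
  - intro j; unfold Dm, Rdiv; ring.
  - apply in_l2_scal_l, in_l2_minus; [|apply in_l2_pred]; assumption.
Qed.

Lemma sumZ_sqr_plus_scal u v c : in_l2 u -> in_l2 v ->
  sumZ (fun j => (u j + c * v j) ^ 2)
  = sumZ (fun j => u j ^ 2) + 2 * c * sumZ (fun j => u j * v j) + c ^ 2 * sumZ (fun j => v j ^ 2).
Proof.
  intros Hu Hv.
  pose proof (ex_sumZ_mult _ _ Hu Hv) as Huv.
  rewrite (sumZ_ext _ (fun j => (u j ^ 2 + (2 * c) * (u j * v j)) + c ^ 2 * v j ^ 2))
    by (intro; ring).
  rewrite !sumZ_plus, !sumZ_scal_l by
    (repeat apply ex_sumZ_plus; try apply ex_sumZ_scal_l; assumption).
  reflexivity.
Qed.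

Lemma sumZ_mult_Dp dx u v : dx <> 0 -> in_l2 u -> in_l2 v ->
  sumZ (fun j => u j * Dp dx v j) = - sumZ (fun j => Dm dx u j * v j).
Proof.
  intros Hdx Hu Hv.
  set (p := fun j => u (j - 1)%Z * v j).
  assert (Hp : ex_sumZ p) by (apply ex_sumZ_mult; [apply in_l2_pred|]; assumption).
  rewrite (sumZ_ext _ (fun j => / dx * (p (j + 1)%Z - u j * v j))).
  2: { intro j; unfold p, Dp; replace (j + 1 - 1)%Z with j by lia; field; assumption. }
  rewrite (sumZ_ext (fun j => Dm dx u j * v j) (fun j => / dx * (u j * v j - p j))).
  2: { intro j; unfold p, Dm; field; assumption. }
  pose proof (ex_sumZ_mult _ _ Hu Hv) as Huv.
  rewrite !sumZ_scal_l, !sumZ_minus, sumZ_succ by (try apply ex_sumZ_succ; assumption).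
  ring.
Qed.

(* [u_j (u_{j+1} - u_j) = ((u_{j+1}² - u_j²) - (u_{j+1} - u_j)²) / 2], and the first part telescopes. *)
Lemma sumZ_mult_Dp_self dx u : dx <> 0 -> in_l2 u ->
  2 * sumZ (fun j => u j * Dp dx u j) = - dx * sumZ (fun j => Dp dx u j ^ 2).
Proof.
  intros Hdx Hu.
  rewrite (sumZ_ext (fun j => u j * Dp dx u j)
             (fun j => / (2 * dx) * ((u (j + 1)%Z ^ 2 - u j ^ 2) - dx ^ 2 * Dp dx u j ^ 2))).
  2: { intro j; unfold Dp; field; assumption. }
  rewrite sumZ_scal_l, sumZ_minus, (sumZ_telescope (fun j => u j ^ 2)), sumZ_scal_l.
  - field; assumption.
  - exact Hu.
  - apply ex_sumZ_minus; [apply in_l2_succ|]; exact Hu.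
  - apply ex_sumZ_scal_l, in_l2_Dp; exact Hu.
Qed.

Lemma sumZ_sqr_Dp_le dx u : 0 < dx -> in_l2 u ->
  dx ^ 2 * sumZ (fun j => Dp dx u j ^ 2) <= 4 * sumZ (fun j => u j ^ 2).
Proof.
  intros Hdx Hu.
  assert (Hu1 : ex_sumZ (fun j => u (j + 1)%Z ^ 2)) by exact (in_l2_succ u Hu).
  assert (Hshift : sumZ (fun j => 2 * u (j + 1)%Z ^ 2 + 2 * u j ^ 2) = 4 * sumZ (fun j => u j ^ 2)).
  { rewrite sumZ_plus, !sumZ_scal_l, (sumZ_succ (fun j => u j ^ 2)) by
      (try apply ex_sumZ_scal_l; assumption).
    ring. }
  rewrite <- Hshift, <- sumZ_scal_l.
  apply sumZ_le.
  - intro j; unfold Dp.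
    replace (dx ^ 2 * ((u (j + 1)%Z - u j) / dx) ^ 2) with ((u (j + 1)%Z - u j) ^ 2)
      by (field; lra).
    pose proof (pow2_ge_0 (u (j + 1)%Z + u j)); nra.
  - apply ex_sumZ_scal_l, in_l2_Dp; exact Hu.
  - apply ex_sumZ_plus; apply ex_sumZ_scal_l; assumption.
Qed.

End SquareSummable.

Lemma cfl_dissipation_le dx c W Q : 0 < dx -> 0 <= W -> 0 <= Q ->
  dx ^ 2 * Q <= 4 * W -> c <= dx ^ 3 / 4 -> c * Q <= dx * W.
Proof.
  intros Hdx HW HQ HQW Hc.
  destruct (Rle_lt_dec c 0) as [Hc0 | Hc0].
  - pose proof (Rmult_le_pos dx W (Rlt_le _ _ Hdx) HW); nra.
  - assert (Hc4 : 4 * c <= dx ^ 3) by lra.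
    apply (Rmult_le_reg_l (dx ^ 2)); [apply pow_lt; exact Hdx|].
    assert (c * (dx ^ 2 * Q) <= c * (4 * W)) by (apply Rmult_le_compat_l; lra).
    assert (4 * c * W <= dx ^ 3 * W) by (apply Rmult_le_compat_r; assumption).
    nra.
Qed.

Theorem proposition5 (theta dt dx : R) (a : seqZ) :
  0 <= theta <= 1 -> 0 < dt -> 0 < dx ->
  dt * (1 - 2 * theta) <= dx ^ 3 / 4 ->
  in_l2 a ->
  norm2_l2 dx (Aop (- (1 - theta)) dt dx a) <= norm2_l2 dx (Aop theta dt dx a).
Proof.
  intros Htheta Hdt Hdx Hcfl Ha.
  unfold norm2_l2, Aop.
  set (w := Dp dx (Dm dx a)).
  assert (Hw : in_l2 w) by (apply in_l2_Dp, in_l2_Dm; exact Ha).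
  assert (HL : in_l2 (Dp dx w)) by (apply in_l2_Dp; exact Hw).
  assert (Hcross : 2 * sumZ (fun j => a j * Dp dx w j) = dx * sumZ (fun j => w j ^ 2)).
  { assert (Hdx0 : dx <> 0) by lra.
    pose proof (sumZ_mult_Dp_self dx (Dm dx a) Hdx0 (in_l2_Dm dx a Ha)) as Hself.
    fold w in Hself.
    rewrite sumZ_mult_Dp by (try apply in_l2_Dm; assumption).
    lra. }
  pose proof (sumZ_sqr_Dp_le dx w Hdx Hw) as Hdiss.
  pose proof (sumZ_ge0 _ (fun j => pow2_ge_0 (w j)) Hw) as HW.
  pose proof (sumZ_ge0 _ (fun j => pow2_ge_0 (Dp dx w j)) HL) as HQ.
  pose proof (cfl_dissipation_le _ _ _ _ Hdx HW HQ Hdiss Hcfl) as Hbound.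
  rewrite !sumZ_sqr_plus_scal by assumption.
  apply Rmult_le_compat_l; [lra|].
  nra.
Qed.
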